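(* Let $n,v,s,t$ be integers with $1\le v\le s\le t\le n$, let $u=\lceil s/v\rceil$, assume $uv\le n$, and put $n_0=n-u(v-1)$. Let $\mathfrak{P}=\{\mathcal{P}_1,\dots,\mathcal{P}_S\}$ be a $u$-complete collection of $v$-partitions of $[n]$, $\mathcal{P}_i=\{P^i_1,\dots,P^i_v\}$, such that every part satisfies $|P^i_j|\le n_0$ (this is the case, e.g., when $S=S(n,u,v)$ is minimal). Let $\mathcal{C}_0$ be a systematic linear $(u,t)$-batch code over $\mathbb{F}_q$ of dimension $n_0$ and redundancy $r_0$, with (linear) encoder $\mathcal{E}_0:\mathbb{F}_q^{n_0}\to\mathbb{F}_q^{r_0}$ such that $(\mathbf{x},\mathcal{E}_0(\mathbf{x}))\in\mathcal{C}_0$ for all $\mathbf{x}$. Define $\mathcal{E}:\mathbb{F}_q^n\to\mathbb{F}_q^{vSr_0}$ by $$\mathcal{E}(\mathbf{x})=\big(\mathcal{E}_0(\mathbf{x}|_{P^1_1},\mathbf{0}),\dots,\mathcal{E}_0(\mathbf{x}|_{P^1_v},\mathbf{0}),\dots,\mathcal{E}_0(\mathbf{x}|_{P^S_1},\mathbf{0}),\dots,\mathcal{E}_0(\mathbf{x}|_{P^S_v},\mathbf{0})\big),$$ where $\mathbf{x}|_P$ lists the coordinates of $\mathbf{x}$ indexed by $P$ in increasing order and $(\mathbf{x}|_P,\mathbf{0})\in\mathbb{F}_q^{n_0}$ is obtained by appending zeros. Then $\mathcal{C}=\{(\mathbf{x},\mathcal{E}(\mathbf{x})):\mathbf{x}\in\mathbb{F}_q^n\}$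 is an $(s,t)$-batch code of dimension $n$ and redundancy $v\cdot S\cdot r_0$.
   Context: $[m]=\{1,\dots,m\}$. A linear code $\mathcal{C}\subseteq\mathbb{F}^N$ of dimension $n$ is systematic if for every $\mathbf{x}\in\mathbb{F}^n$ there is a unique codeword whose first $n$ coordinates equal $\mathbf{x}$. A set $R\subseteq[N]$ is a recovering set for $i\in[n]$ if there are scalars $\lambda_k$ ($k\in R$) with $\mathbf{c}(i)=\sum_{k\in R}\lambda_k\mathbf{c}(k)$ for all $\mathbf{c}\in\mathcal{C}$. $(s,t)$-batch code ($1\le s\le t$): a systematic linear code $\mathcal{C}\subseteq\mathbb{F}^N$ of dimension $n$ such that for every choice of indices $i_1,\dots,i_s\in[n]$ (not necessarily distinct) and nonnegative integers $a_1,\dots,a_s$ with $\sum_j a_j=t$, there exist $t$ pairwise disjoint sets $R_{j,l}\subseteq[N]$ ($j\in[s]$, $l\in[a_j]$), each a recovering set for $i_j$. Redundancy is $N-n$. A $v$-partition of $[n]$ is a partition of $[n]$ into $v$ sets $P_1,\dots,P_v$ (for this definition parts may be empty). A $uv$-subset $I\subseteq[n]$ is covered by the $v$-partition $\{P_1,\dots,P_v\}$ if $|P_i\cap I|=u$ for all $i\in[v]$. A collection of $v$-partitions of $[n]$ is $u$-complete if every $uv$-subset of $[n]$ is covered by some member of the collection. $S(n,u,v)$ is the minimum cardinality of a $u$-complete collection of $v$-partitions of $[n]$ (for $uv\le n$). *)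

From HB Require Import structures.
From mathcomp Require Import all_boot all_order all_algebra all_field.
Set Implicit Arguments. Unset Strict Implicit. Unset Printing Implicit Defensive.
Import GRing.Theory.
Local Open Scope ring_scope.

Section Codes.
Variable F : finFieldType.

Definition linear_code (N : nat) (C : {set 'rV[F]_N}) : Prop :=
  0 \in C /\ forall (a : F) (x y : 'rV[F]_N), x \in C -> y \in C -> a *: x + y \in C.

Definition systematic (n r : nat) (C : {set 'rV[F]_(n + r)}) : Prop :=
  forall x : 'rV[F]_n, exists! c : 'rV[F]_(n + r), c \in C /\ lsubmx c = x.

Definition recovering_set (n r : nat) (C : {set 'rV[F]_(n + r)})
    (i : 'I_n) (R : {set 'I_(n + r)}) : Prop :=
  exists lam : 'I_(n + r) -> F,
    forall c, c \in C -> c 0 (lshift r i) = \sum_(k in R) lam k * c 0 k.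

Definition batch_code (s t n r : nat) (C : {set 'rV[F]_(n + r)}) : Prop :=
  [/\ (1 <= s <= t)%N, linear_code C, systematic C &
   forall (idx : 'I_s -> 'I_n) (a : 'I_s -> nat),
     (\sum_(j < s) a j)%N = t ->
     exists R : forall j : 'I_s, 'I_(a j) -> {set 'I_(n + r)},
       (forall j (l : 'I_(a j)), recovering_set C (idx j) (R j l)) /\
       (forall j (l : 'I_(a j)) j' (l' : 'I_(a j')),
          (j != j') || (nat_of_ord l != nat_of_ord l') ->
          [disjoint R j l & R j' l'])].

End Codes.

(* v-partition of [n] (parts indexed by 'I_v, possibly empty) *)
Definition v_partition (n v : nat) (P : 'I_v -> {set 'I_n}) : Prop :=
  (forall x : 'I_n, exists j, x \in P j) /\
  (forall j j', j != j' -> [disjoint P j & P j']).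

Definition covers (n u v : nat) (P : 'I_v -> {set 'I_n}) (I : {set 'I_n}) : Prop :=
  forall j, #|P j :&: I| = u.

Definition u_complete (n u v S : nat) (Pcol : 'I_S -> 'I_v -> {set 'I_n}) : Prop :=
  forall I : {set 'I_n}, #|I| = (u * v)%N -> exists i, covers u (Pcol i) I.

Definition ceil_div (s v : nat) : nat := ((s + v.-1) %/ v)%N.

(* (x|_P, 0) in F^{n0}: coordinates of x indexed by P in increasing order,
   padded with zeros (truncated if #|P| > n0, which is excluded in the theorem) *)
Definition restrict_pad (F : fieldType) (n n0 : nat) (P : {set 'I_n}) (x : 'rV[F]_n)
  : 'rV[F]_n0 :=
  \row_(k < n0) oapp (fun i : 'I_n => x 0 i) 0 (onth (enum P) k).

(* E(x) = (E0(x|P^1_1,0), ..., E0(x|P^1_v,0), ..., E0(x|P^S_v,0)),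
   of length S*(v*r0) = v*S*r0 *)
Definition concat_encoder (F : fieldType) (n n0 r0 v S : nat)
    (Pcol : 'I_S -> 'I_v -> {set 'I_n}) (E0 : 'rV[F]_n0 -> 'rV[F]_r0)
    (x : 'rV[F]_n) : 'rV[F]_(S * (v * r0)) :=
  mxvec (\matrix_(i < S, jk < v * r0)
           (mxvec (\matrix_(j < v, k < r0) E0 (restrict_pad n0 (Pcol i j) x) 0 k)) 0 jk).

Definition code_of (F : finFieldType) (n r : nat) (E : 'rV[F]_n -> 'rV[F]_r)
  : {set 'rV[F]_(n + r)} :=
  [set row_mx x (E x) | x : 'rV[F]_n].

From HB Require Import structures.
From mathcomp Require Import all_boot all_order all_algebra all_field.
From mathcomp Require Import zify.
Set Implicit Arguments. Unset Strict Implicit. Unset Printing Implicit Defensive.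
Import GRing.Theory.
Local Open Scope ring_scope.

(* A batch request (indices idx_j with multiplicities a_j summing to t) is
   the same thing as a finite family of at most t requests f : A -> [n]
   whose values take at most s distinct indices; we first prove that the two
   formulations are equivalent ([multiset_batch_property] and
   [batch_property_multiset]), which removes all dependent bookkeeping.
   Given such a request for the concatenated code C, the at most s <= uv
   requested indices are extended to a uv-subset I, and u-completeness
   provides a partition P_1, ..., P_v meeting I in u points per part.
   The requests falling into P_j involve at most u distinct indices, so the
   component code C_0 (a (u,t)-batch code) serves them, encoded as local
   indices of P_j.  The coordinate map [block_coord] transports codewords
   of the j-th component into codewords of C ([block_coord_codeword]), hence
   transports recovering sets ([recovering_set_transfer]), and it is
   injective across parts ([block_coord_inj]), so the transported sets of
   different parts stay disjoint ([concat_code_serves]). *)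

Lemma subset_of_card (T : finType) (A : {set T}) (k : nat) :
  (#|A| <= k <= #|T|)%N -> exists2 B : {set T}, A \subset B & #|B| = k.
Proof.
move=> /andP[hAk hkT].
pose X := [set x in take (k - #|A|) (enum (~: A))].
exists (A :|: X); first exact: subsetUl.
have AX0 : A :&: X = set0.
  apply/setP => x; rewrite !inE; apply/negP => /andP[xA /mem_take].
  by rewrite mem_enum inE xA.
have cardX : #|X| = minn (k - #|A|) #|~: A|.
  rewrite cardsE (card_uniqP _) ?take_uniq ?enum_uniq // size_take -cardE.
  by rewrite /minn; case: ltnP.
have := cardsC A; rewrite cardsU AX0 cards0 subn0 cardX; lia.
Qed.

Lemma ceil_div_mul (s v : nat) : (0 < v)%N -> (s <= ceil_div s v * v)%N.
Proof.
move=> hv; rewrite /ceil_div.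
have := divn_eq (s + v.-1) v; have := ltn_pmod (s + v.-1) hv; lia.
Qed.

Lemma mxvec_index_inj (m n : nat) (i1 i2 : 'I_m) (j1 j2 : 'I_n) :
  mxvec_index i1 j1 = mxvec_index i2 j2 -> i1 = i2 /\ j1 = j2.
Proof. by move/cast_ord_inj/enum_rank_inj => [-> ->]. Qed.

Lemma onth_index (T : eqType) (s : seq T) (x : T) :
  x \in s -> onth s (index x s) = Some x.
Proof. by move=> xs; rewrite onthE (nth_map x) ?index_mem ?nth_index. Qed.

(* The image of a set under a partial map, and the regrouping of a linear
   combination along such a map; this is how a linear relation among the
   coordinates of a component codeword becomes one among coordinates of C. *)
Definition opt_image (T U : finType) (psi : T -> option U) (A : {set T}) : {set U} :=
  [set z | [exists q in A, psi q == Some z]].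

Lemma sum_opt_image (R : pzSemiRingType) (T U : finType) (psi : T -> option U)
    (A : {set T}) (lam : T -> R) (w : U -> R) :
  \sum_(q in A) lam q * oapp w 0 (psi q) =
  \sum_(z in opt_image psi A) (\sum_(q in A | psi q == Some z) lam q) * w z.
Proof.
rewrite [RHS]big_mkcond /=.
under [RHS]eq_bigr => z _.
  rewrite (_ : (if _ then _ else _) = \sum_(q in A | psi q == Some z) lam q * w z).
    over.
  rewrite -mulr_suml inE; case: existsP => // noq.
  rewrite big_pred0 ?mul0r // => q; apply/negP => /andP[qA hq].
  by apply: noq; exists q; rewrite qA.
rewrite (exchange_big_dep (mem A)) /=; last by move=> z q _ /andP[].
apply: eq_bigr => q qA; rewrite qA; case: (psi q) => [z0|] /=.
  by rewrite (big_pred1 z0) // => z; apply/eqP/eqP => [[->]|->].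
by rewrite mulr0 big_pred0.
Qed.

Lemma recovering_set_transfer (F : finFieldType) (n0 r0 n r : nat)
    (C0 : {set 'rV[F]_(n0 + r0)}) (C : {set 'rV[F]_(n + r)})
    (psi : 'I_(n0 + r0) -> option 'I_(n + r)) (i0 : 'I_n0) (g : 'I_n)
    (R0 : {set 'I_(n0 + r0)}) :
  (forall c, c \in C ->
     exists2 c0, c0 \in C0 & forall q, c0 0 q = oapp (c 0) 0 (psi q)) ->
  psi (lshift r0 i0) = Some (lshift r g) ->
  recovering_set C0 i0 R0 -> recovering_set C g (opt_image psi R0).
Proof.
move=> hC hpsi [lam hlam].
exists (fun z => \sum_(q in R0 | psi q == Some z) lam q) => c cC.
have [c0 c0C0 hc0] := hC c cC.
have -> : c 0 (lshift r g) = c0 0 (lshift r0 i0) by rewrite hc0 hpsi.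
rewrite hlam // -sum_opt_image.
by apply: eq_bigr => q _; rewrite hc0.
Qed.

Section Requests.
Variables (F : finFieldType) (n r : nat).
Implicit Type C : {set 'rV[F]_(n + r)}.

Definition serves C (K : finType) (A : {set K}) (f : K -> 'I_n) : Prop :=
  exists R : K -> {set 'I_(n + r)},
    (forall k, k \in A -> recovering_set C (f k) (R k)) /\
    (forall k k', k \in A -> k' \in A -> k != k' -> [disjoint R k & R k']).

Definition batch_property (s t : nat) C : Prop :=
   forall (idx : 'I_s -> 'I_n) (a : 'I_s -> nat),
     (\sum_(j < s) a j)%N = t ->
     exists R : forall j : 'I_s, 'I_(a j) -> {set 'I_(n + r)},
       (forall j (l : 'I_(a j)), recovering_set C (idx j) (R j l)) /\
       (forall j (l : 'I_(a j)) j' (l' : 'I_(a j')),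
          (j != j') || (nat_of_ord l != nat_of_ord l') ->
          [disjoint R j l & R j' l']).

Definition multiset_batch (s t : nat) C : Prop :=
  forall (K : finType) (A : {set K}) (f : K -> 'I_n),
    (#|A| <= t)%N -> (#|f @: A| <= s)%N -> serves C A f.

(* A batch request is the request family indexed by the pairs (j, l), l < a_j. *)
Lemma multiset_batch_property (s t : nat) C :
  multiset_batch s t C -> batch_property s t C.
Proof.
move=> hC idx a hsum.
pose f (p : {j : 'I_s & 'I_(a j)}) := idx (tag p).
have hcard : #|[set: {j : 'I_s & 'I_(a j)}]| = t.
  rewrite cardsT card_tagged sumnE big_map big_enum -hsum /=.
  by apply: eq_bigr => j _; rewrite card_ord.
have himg : (#|f @: [set: {j : 'I_s & 'I_(a j)}]| <= s)%N.
  have sub : f @: [set: {j : 'I_s & 'I_(a j)}] \subset idx @: [set: 'I_s].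
    by apply/subsetP => z /imsetP[p _ ->]; apply: imset_f; rewrite inE.
  apply: leq_trans (subset_leq_card sub) _.
  by apply: leq_trans (leq_imset_card _ _) _; rewrite cardsT card_ord.
have [R [hrec hdis]] := hC _ _ f (eq_leq hcard) himg.
exists (fun j l => R (Tagged _ l)); split=> [j l|j l j' l' hne].
  exact: hrec (Tagged _ l) (in_setT _).
apply: hdis; rewrite ?in_setT //; apply: contraL hne => /eqP eqp.
have ej : j = j' := congr1 tag eqp.
subst j'; move: eqp => /eqP; rewrite eq_Tagged /= => /eqP->.
by rewrite !eqxx.
Qed.

(* Conversely, group the requests of a family by value: the j-th distinct
   value gets multiplicity the size of its fiber (the first one also absorbs
   the missing t - #|A|), and each request is served by the recovering set
   numbered by its rank inside its fiber. *)
Lemma batch_property_multiset (s t : nat) C :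
  (0 < s)%N -> batch_property s t C -> multiset_batch s t C.
Proof.
move=> spos hC K A f hA himg.
case: (pickP (mem A)) => [k0 _|A0]; last first.
  by exists (fun=> set0); split=> [k|k k']; rewrite [k \in A]A0.
pose e := enum (f @: A).
have mem_e k : k \in A -> f k \in e by move=> kA; rewrite /e mem_enum imset_f.
pose slot (k : K) : 'I_s := insubd (Ordinal spos) (index (f k) e).
have slotE k : k \in A -> val (slot k) = index (f k) e.
  move=> kA; rewrite val_insubd; case: ltnP => // hle; exfalso.
  have : (index (f k) e < size e)%N by rewrite index_mem mem_e.
  by rewrite -cardE; lia.
pose fiber j := [set k in A | slot k == j].
pose a j := (#|fiber j| + (j == Ordinal spos) * (t - #|A|))%N.
have hfiber : (\sum_j #|fiber j|)%N = #|A|.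
  rewrite -sum1_card (partition_big slot predT) //=.
  by apply: eq_bigr => j _; rewrite -sum1_card; apply: eq_bigl => k; rewrite inE.
have hsum : (\sum_j a j)%N = t.
  rewrite big_split /= hfiber (bigD1 (Ordinal spos)) //= mul1n big1 => [|j /negbTE-> //].
  by lia.
have [R [hrec hdis]] := hC (fun j => nth (f k0) e j) a hsum.
pose rank k := index k (enum (fiber (slot k))).
have rank_lt k : k \in A -> (rank k < a (slot k))%N.
  move=> kA; apply: leq_trans (leq_addr _ _).
  by rewrite cardE index_mem mem_enum inE kA eqxx.
have insub_rank k (kA : k \in A) : insub (rank k) = Some (Ordinal (rank_lt k kA)).
  by apply: insubT.
exists (fun k => oapp (R (slot k)) set0 (insub (rank k))); split.
  move=> k kA; rewrite (insub_rank k kA) /=.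
  have := hrec (slot k) (Ordinal (rank_lt k kA)).
  by rewrite slotE // nth_index // mem_e.
move=> k k' kA k'A hne.
rewrite (insub_rank k kA) (insub_rank k' k'A) /=.
apply: hdis => /=; case: (eqVneq (slot k) (slot k')) => //= eslot.
apply: contra hne => /eqP erank; apply/eqP.
move: erank; rewrite /rank eslot; apply: (index_inj k);
  by rewrite mem_enum inE ?kA ?k'A ?eslot eqxx.
Qed.

End Requests.

Section CodeOf.
Variables (F : finFieldType) (n r : nat) (E : 'rV[F]_n -> 'rV[F]_r).

Lemma code_of_linear :
  (forall a x y, E (a *: x + y) = a *: E x + E y) -> linear_code (code_of E).
Proof.
move=> Elin; have E0 : E 0 = 0.
  by have := Elin (-1) 0 0; rewrite !scaleN1r oppr0 add0r addNr.
split; first by apply/imsetP; exists 0; rewrite ?E0 ?row_mx0.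
move=> a _ _ /imsetP[x _ ->] /imsetP[y _ ->]; apply/imsetP.
by exists (a *: x + y); rewrite // Elin scale_row_mx add_row_mx.
Qed.

Lemma code_of_systematic : systematic (code_of E).
Proof.
move=> x; exists (row_mx x (E x)); split.
  by split; [apply/imsetP; exists x | rewrite row_mxKl].
by move=> _ [/imsetP[y _ ->]]; rewrite row_mxKl => ->.
Qed.

End CodeOf.

Lemma restrict_pad_linear (F : fieldType) (n n0 : nat) (P : {set 'I_n}) (a : F) x y :
  restrict_pad n0 P (a *: x + y) = a *: restrict_pad n0 P x + restrict_pad n0 P y.
Proof.
apply/rowP => k; rewrite !mxE; case: onth => [g|] /=; first by rewrite !mxE.
by rewrite mulr0 addr0.
Qed.

Section ConcatCode.
Variables (F : finFieldType) (n n0 r0 v S : nat).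
Variables (Pcol : 'I_S -> 'I_v -> {set 'I_n}) (E0 : 'rV[F]_n0 -> 'rV[F]_r0).

Local Notation E := (concat_encoder Pcol E0).

Lemma concat_encoder_linear :
  (forall a x y, E0 (a *: x + y) = a *: E0 x + E0 y) ->
  forall a x y, E (a *: x + y) = a *: E x + E y.
Proof.
move=> E0lin a x y; apply/rowP => k; case/mxvec_indexP: k => i jm.
case/mxvec_indexP: jm => j m.
by rewrite !mxE !mxvecE !mxE !mxvecE !mxE restrict_pad_linear E0lin !mxE.
Qed.

(* Where coordinate q of the (i,j)-th component codeword lives in C: the
   p-th information coordinate is the p-th element of P^i_j (or nothing, for
   a padding zero), the m-th redundancy coordinate is the (i,j,m) entry of
   the encoder output. *)
Definition block_coord (i : 'I_S) (j : 'I_v) (q : 'I_(n0 + r0)) :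
    option 'I_(n + S * (v * r0)) :=
  match split q with
  | inl p => omap (lshift _) (onth (enum (Pcol i j)) p)
  | inr m => Some (rshift n (mxvec_index i (mxvec_index j m)))
  end.

Lemma block_coord_codeword (i : 'I_S) (j : 'I_v) (x : 'rV[F]_n)
    (q : 'I_(n0 + r0)) :
  let y := restrict_pad n0 (Pcol i j) x in
  row_mx y (E0 y) 0 q = oapp (row_mx x (E x) 0) 0 (block_coord i j q).
Proof.
rewrite /block_coord -[q]splitK; case: (split q) => [p|m]; rewrite unsplitK /=.
  by rewrite row_mxEl mxE; case: onth => //= g; rewrite row_mxEl.
by rewrite !row_mxEr mxvecE mxE mxvecE mxE.
Qed.

(* The position of g inside P (d is an irrelevant default when g is not in P). *)
Definition local_index (P : {set 'I_n}) (d : 'I_n0) (g : 'I_n) : 'I_n0 :=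
  insubd d (index g (enum P)).

Lemma block_coord_info (i : 'I_S) (j : 'I_v) (d : 'I_n0) (g : 'I_n) :
  g \in Pcol i j -> (#|Pcol i j| <= n0)%N ->
  block_coord i j (lshift r0 (local_index (Pcol i j) d g)) = Some (lshift _ g).
Proof.
move=> gP hsize; rewrite /block_coord (unsplitK (inl _)) /= val_insubd.
have gE : g \in enum (Pcol i j) by rewrite mem_enum.
have -> : (index g (enum (Pcol i j)) < n0)%N.
  by apply: leq_trans hsize; rewrite cardE index_mem.
by rewrite onth_index.
Qed.

Lemma block_coord_inj (i : 'I_S) (j1 j2 : 'I_v) (q1 q2 : 'I_(n0 + r0)) z :
  (forall j j', j != j' -> [disjoint Pcol i j & Pcol i j']) ->
  block_coord i j1 q1 = Some z -> block_coord i j2 q2 = Some z -> j1 = j2 /\ q1 = q2.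
Proof.
move=> hdis; rewrite /block_coord -[q1]splitK -[q2]splitK !unsplitK.
case: (split q1) => [p1|m1]; case: (split q2) => [p2|m2] /=.
- case e1: onth => [g1|] //= /Some_inj <-.
  case e2: onth => [g2|] //= /Some_inj/lshift_inj eg; subst g2.
  have g1P j p : onth (enum (Pcol i j)) p = Some g1 -> g1 \in Pcol i j.
    by move=> e; rewrite -mem_enum; apply/onthP; exists p.
  have ej : j1 = j2.
    apply/eqP; apply: contraT => /hdis /disjointFr /(_ (g1P _ _ e1)).
    by rewrite (g1P _ _ e2).
  subst j2; split => //; congr (lshift _ _).
  apply/val_inj/(onth_inj _ _ _ (enum_uniq _)).
    have := onthTE (enum (Pcol i j1)) p1; rewrite e1 => /esym hp1.
    exact: leq_ltn_trans (geq_minr _ _) hp1.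
  by rewrite e1 e2.
- by case: onth => [g1|] //= /Some_inj <- /Some_inj/eqP; rewrite eq_rlshift.
- by move=> /Some_inj <-; case: onth => [g2|] //= /Some_inj/eqP; rewrite eq_lrshift.
- move=> /Some_inj <- /Some_inj/rshift_inj/mxvec_index_inj [_].
  by move=> /mxvec_index_inj [-> ->].
Qed.

Lemma concat_code_serves (u t : nat) (C0 : {set 'rV[F]_(n0 + r0)}) (i : 'I_S)
    (K : finType) (A : {set K}) (f : K -> 'I_n) :
  (0 < n0)%N -> v_partition (Pcol i) -> (forall j, #|Pcol i j| <= n0)%N ->
  (forall y, row_mx y (E0 y) \in C0) -> multiset_batch u t C0 ->
  (#|A| <= t)%N -> (forall j, #|Pcol i j :&: f @: A| <= u)%N ->
  serves (code_of E) A f.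
Proof.
move=> n0pos [hcover hdis] hsize hE0 hC0 hA hreq.
pose part g : 'I_v := xchoose (hcover g).
have part_in g : g \in Pcol i (part g) := xchooseP (hcover g).
pose req j := [set k in A | part (f k) == j].
pose loc j k := local_index (Pcol i j) (Ordinal n0pos) (f k).
have serve_part j : serves C0 (req j) (loc j).
  apply: hC0.
    by apply: leq_trans hA; apply/subset_leq_card/subsetP => k; rewrite inE => /andP[].
  apply: leq_trans (hreq j).
  apply: leq_trans (leq_imset_card (local_index (Pcol i j) (Ordinal n0pos)) _).
  apply/subset_leq_card/subsetP => l /imsetP[k]; rewrite inE => /andP[kA /eqP <-] ->.
  by rewrite /loc imset_f // inE part_in imset_f.
have [R0 hR0] := fin_all_exists serve_part.
exists (fun k => opt_image (block_coord i (part (f k))) (R0 (part (f k)) k)); split.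
  move=> k kA; apply: (recovering_set_transfer (i0 := loc (part (f k)) k)).
  - move=> c /imsetP[x _ ->].
    pose y := restrict_pad n0 (Pcol i (part (f k))) x.
    by exists (row_mx y (E0 y)); last exact: block_coord_codeword.
  - exact: block_coord_info (part_in _) (hsize _).
  - by apply: (hR0 _).1; rewrite inE kA eqxx.
move=> k k' kA k'A hne; rewrite -setI_eq0; apply/eqP/setP => z; rewrite !inE.
apply/negP => /andP[/existsP[q /andP[qR /eqP e]] /existsP[q' /andP[q'R /eqP e']]].
have [ej eq] := block_coord_inj hdis e e'; subst q'; rewrite -ej in q'R.
have kreq : k \in req (part (f k)) by rewrite inE kA eqxx.
have k'req : k' \in req (part (f k)) by rewrite inE k'A ej eqxx.
by have /disjointFr/(_ qR) := (hR0 _).2 k k' kreq k'req hne; rewrite q'R.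
Qed.

End ConcatCode.

Theorem theorem4 (F : finFieldType) (n v s t u n0 r0 S : nat)
  (hv : (1 <= v)%N) (hvs : (v <= s)%N) (hst : (s <= t)%N) (htn : (t <= n)%N)
  (hu : u = ceil_div s v) (huv : (u * v <= n)%N) (hn0 : n0 = (n - u * (v - 1))%N)
  (Pcol : 'I_S -> 'I_v -> {set 'I_n})
  (hpart : forall i, v_partition (Pcol i))
  (hcomp : u_complete u Pcol)
  (hsize : forall i j, (#|Pcol i j| <= n0)%N)
  (C0 : {set 'rV[F]_(n0 + r0)})
  (hC0 : batch_code u t C0)
  (E0 : 'rV[F]_n0 -> 'rV[F]_r0)
  (hE0lin : forall (a : F) (x y : 'rV[F]_n0), E0 (a *: x + y) = a *: E0 x + E0 y)
  (hE0 : forall x : 'rV[F]_n0, row_mx x (E0 x) \in C0) :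
  batch_code s t (code_of (@concat_encoder F n n0 r0 v S Pcol E0)).
Proof.
have s_le_uv : (s <= u * v)%N by rewrite hu; apply: ceil_div_mul.
have u_pos : (0 < u)%N by move: s_le_uv; case: (u) => //; lia.
have n0_pos : (0 < n0)%N by have := mulnBr u v 1; rewrite muln1; lia.
have [_ _ _ hreq0] := hC0.
have C0_multiset := batch_property_multiset u_pos hreq0.
split.
- by apply/andP; split; lia.
- exact/code_of_linear/concat_encoder_linear.
- exact: code_of_systematic.
apply: multiset_batch_property => K A f hA himg.
have [|I fA_I hI] := @subset_of_card _ (f @: A) (u * v); first by rewrite card_ord; lia.
have [i hcov] := hcomp I hI.
apply: (concat_code_serves n0_pos (hpart i) (hsize i) hE0 C0_multiset hA) => j.
by rewrite -(hcov j); apply/subset_leq_card/setIS.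
Qed.
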